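(* Every Move-To-Front-Every-Other-Access algorithm (for any choice of initial bits) has competitive ratio at least $2.5$ (full cost model): for every such algorithm $A$, every $c<2.5$ and every constant $b$, there exist a list and a request sequence $\sigma$ with $A(\sigma)>c\cdot\mathrm{OPT}(\sigma)+b$.
   Context: Static list update: a list of distinct items in some initial order; serving a request to the item at position $i$ (from the front) costs $i$ (full cost model); the accessed item may be moved closer to the front for free (free exchange); two adjacent items may be swapped at cost $1$ (paid exchange). $A(\sigma)$ is the total cost of algorithm $A$ and $\mathrm{OPT}(\sigma)$ the minimum cost of any offline algorithm from the same initial list. A Move-To-Front-Every-Other-Access (MTF2) algorithm maintains one bit per item, with arbitrary initial values; on each request to an item $z$ it flips the bit of $z$, and if the bit becomes $0$ it moves $z$ to the front (free exchange), otherwise it leaves the list unchanged; it makes no paid exchanges. (MTFO is the case with all initial bits $1$, MTFE with all initial bits $0$.) *)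

From mathcomp Require Import all_boot.
From Stdlib Require Import Reals.

Set Implicit Arguments.
Unset Strict Implicit.
Unset Printing Implicit Defensive.

(* Items are natural numbers; a list is a [seq nat] (front = head).
   The position of item x in list L (1-based) is [index x L + 1]. *)

(* Paid exchange: swap the items at (0-based) positions i and i+1
   (no-op if out of range; it is still charged cost 1). *)
Definition swap_adj (L : seq nat) (i : nat) : seq nat :=
  if i.+1 < size L then take i L ++ nth 0 L i.+1 :: nth 0 L i :: drop i.+2 L
  else L.

(* Move item x to (0-based) position j of the list (free exchange when
   j <= current position of x). *)
Definition move_to (x j : nat) (L : seq nat) : seq nat :=
  take j (rem x L) ++ x :: drop j (rem x L).

(* offline_cost L sigma k : some offline algorithm, starting from list L,
   serves sigma with total cost k.  Before each request it performs any
   sequence [sw] of paid adjacent exchanges (cost 1 each), then pays the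
   position of the requested item, then may move that item to any position
   closer to the front for free. *)
Inductive offline_cost : seq nat -> seq nat -> nat -> Prop :=
| off_nil L : offline_cost L [::] 0
| off_cons L r s (sw : seq nat) (j : nat) k :
    let L1 := foldl swap_adj L sw in
    j <= index r L1 ->
    offline_cost (move_to r j L1) s k ->
    offline_cost L (r :: s) (size sw + (index r L1).+1 + k).

Definition is_OPT (L sigma : seq nat) (opt : nat) : Prop :=
  offline_cost L sigma opt /\ (forall k, offline_cost L sigma k -> opt <= k).

Definition mtf (x : nat) (L : seq nat) : seq nat := x :: rem x L.

Fixpoint mtf2_cost (bits : nat -> bool) (L sigma : seq nat) : nat :=
  match sigma with
  | [::] => 0
  | z :: s =>
      let nb := ~~ bits z in
      let bits' := fun y => if y == z then nb else bits y in
      let L' := if nb then L else mtf z L in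
      (index z L).+1 + mtf2_cost bits' L' s
  end.

(* Fix n items whose initial bits all equal (infinitely many naturals share
   a bit value, so such items exist for any initial bit assignment).  For a
   list ys of these items, a phase consists of every item of ys requested
   three times in a row, last item first, followed by ys once in order.
   - If all bits are 0 and MTF2 holds the list ys, the triple requests cost
     2n+1 each and leave ys with all bits 1; the in-order pass then costs
     1+2+...+n and leaves rev ys with all bits 0.  A phase costs
     n(2n+1) + n(n+1)/2 = (5n^2+3n)/2 and the next phase starts on rev ys.
   - An offline algorithm holding rev ys moves each tripled item to the front
     on its first request, ending at ys; the in-order pass is then served
     without moves, back on list rev(rev ys).  A phase costs n^2+3n.
   After a prefix normalising the bits to 0, m phases give MTF2 at least
   m(5n^2+3n)/2 against OPT at most 4n^2 + m(n^2+3n), a ratio tending to 5/2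
   as n grows and then m grows. *)

From mathcomp Require Import all_boot zify.
From Stdlib Require Import Reals Lra Classical.

Set Implicit Arguments.
Unset Strict Implicit.
Unset Printing Implicit Defensive.

Lemma rem_cat_cons (x : nat) (s1 s2 : seq nat) :
  x \notin s1 -> rem x (s1 ++ x :: s2) = s1 ++ s2.
Proof.
elim: s1 => [|y s1 IH] /=; first by rewrite eqxx.
by rewrite in_cons negb_or eq_sym => /andP[/negbTE -> /IH ->].
Qed.

Lemma index_cat_cons (x : nat) (s1 s2 : seq nat) :
  x \notin s1 -> index x (s1 ++ x :: s2) = size s1.
Proof. by move=> x_s1; rewrite index_cat (negbTE x_s1) index_head addn0. Qed.

Lemma mtf_cat_cons (x : nat) (s1 s2 : seq nat) :
  x \notin s1 -> mtf x (s1 ++ x :: s2) = x :: s1 ++ s2.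
Proof. by move=> x_s1; rewrite /mtf rem_cat_cons. Qed.

Lemma index_rcons_new (x : nat) (X : seq nat) : x \notin X -> index x (rcons X x) = size X.
Proof. by move=> xX; rewrite -cats1 index_cat_cons. Qed.

Lemma mtf_rcons_new (x : nat) (X : seq nat) : x \notin X -> mtf x (rcons X x) = x :: X.
Proof. by move=> xX; rewrite -cats1 mtf_cat_cons ?cats0. Qed.

Lemma move_to_front (x : nat) (L : seq nat) : move_to x 0 L = mtf x L.
Proof. by rewrite /move_to take0 drop0. Qed.

Lemma move_to_index (x : nat) (L : seq nat) :
  x \in L -> move_to x (index x L) L = L.
Proof.
move=> xL; rewrite /move_to remE.
have size_take_i : size (take (index x L) L) = index x L.
  by rewrite size_take index_mem xL.
rewrite take_size_cat // drop_size_cat //.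
by rewrite -[in RHS](cat_take_drop (index x L) L) (drop_nth x) ?index_mem ?nth_index.
Qed.

(* sum_from q r = (q+1) + (q+2) + ... + (q+r): the cost of requesting, in
   order, r items standing at positions q+1, ..., q+r. *)
Fixpoint sum_from (q r : nat) : nat :=
  if r is r'.+1 then q.+1 + sum_from q.+1 r' else 0.

Lemma sum_from_closed (q r : nat) : 2 * sum_from q r = 2 * q * r + r * r + r.
Proof. by elim: r q => [|r IH] q /=; rewrite ?mulnDr ?IH; lia. Qed.

Definition triples (U : seq nat) : seq nat :=
  flatten [seq [:: y; y; y] | y <- rev U].

Lemma triples_rcons (U : seq nat) (y : nat) :
  triples (rcons U y) = [:: y; y; y] ++ triples U.
Proof. by rewrite /triples rev_rcons. Qed.

Lemma size_triples (U : seq nat) : size (triples U) = 3 * size U.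
Proof.
elim/last_ind: U => [|U y IH] //.
by rewrite triples_rcons size_cat IH size_rcons mulnS.
Qed.

Lemma mem_triples (U : seq nat) : {subset triples U <= U}.
Proof.
elim/last_ind: U => [|U y IH] x //; rewrite triples_rcons mem_rcons.
by rewrite !in_cons => /or4P[-> | -> | -> | /IH ->]; rewrite ?orbT.
Qed.

Definition phase (ys : seq nat) : seq nat := triples ys ++ ys.

Fixpoint phases (m : nat) (ys : seq nat) : seq nat :=
  if m is m'.+1 then phase ys ++ phases m' (rev ys) else [::].

Lemma mem_phases (m : nat) (ys : seq nat) : {subset phases m ys <= ys}.
Proof.
elim: m ys => [|m IH] ys x //=.
rewrite /phase !mem_cat => /orP[/orP[/mem_triples // | //] | /IH].
by rewrite mem_rev.
Qed.

Definition flip_bit (b : nat -> bool) (z : nat) : nat -> bool :=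
  fun y => if y == z then ~~ b z else b y.

Lemma flip_bit_self (b : nat -> bool) (z : nat) : flip_bit b z z = ~~ b z.
Proof. by rewrite /flip_bit eqxx. Qed.

Lemma flip_bit_notin (b : nat -> bool) (z : nat) (X : seq nat) (v : bool) :
  z \notin X -> {in X, forall y, b y = v} -> {in X, forall y, flip_bit b z y = v}.
Proof.
move=> zX bX y yX; rewrite /flip_bit ifN ?bX //.
by apply: contraNneq zX => <-.
Qed.

Lemma flip_bit_cons (b : nat -> bool) (z : nat) (X : seq nat) (v : bool) :
  z \notin X -> ~~ b z = v -> {in X, forall y, b y = v} ->
  {in z :: X, forall y, flip_bit b z y = v}.
Proof.
move=> zX bz bX y; rewrite in_cons => /orP[/eqP -> | yX].
  by rewrite flip_bit_self.
exact: flip_bit_notin zX bX y yX.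
Qed.

Lemma mtf2_cost_cons (b : nat -> bool) (L : seq nat) (z : nat) (s : seq nat) :
  mtf2_cost b L (z :: s) =
  (index z L).+1 + mtf2_cost (flip_bit b z) (if b z then mtf z L else L) s.
Proof. by rewrite /= /flip_bit; case: (b z). Qed.

(* MTF2 on the triple requests: from P ++ U, bits 1 on P and 0 on U, each
   tripled item is at the back, pays 2|P++U|+1 and ends at the front with
   bit 1; the list becomes U ++ P with all bits 1. *)
Lemma mtf2_triples (U P : seq nat) (b : nat -> bool) (s : seq nat) :
  uniq (P ++ U) -> {in P, forall z, b z = true} -> {in U, forall z, b z = false} ->
  exists b' : nat -> bool, {in U ++ P, forall z, b' z = true} /\
    mtf2_cost b (P ++ U) (triples U ++ s) =
    size U * (2 * size (P ++ U)).+1 + mtf2_cost b' (U ++ P) s.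
Proof.
elim/last_ind: U P b => [|U y IH] P b uniq_PU bP bU; first by exists b; rewrite cats0.
move: uniq_PU; rewrite -rcons_cat rcons_uniq mem_cat negb_or => /andP[/andP[yP yU] uniq_PU].
have by0 : b y = false by apply: bU; rewrite mem_rcons mem_head.
have bU' : {in U, forall z, b z = false}.
  by move=> z zU; apply: bU; rewrite mem_rcons in_cons zU orbT.
set b3 := flip_bit (flip_bit (flip_bit b y) y) y.
have b3P : {in y :: P, forall z, b3 z = true}.
  apply: flip_bit_cons => //; first by rewrite !flip_bit_self by0.
  by do 2!apply: flip_bit_notin => //.
have b3U : {in U, forall z, b3 z = false} by do 3!apply: flip_bit_notin => //.
have uniq_yPU : uniq ((y :: P) ++ U) by rewrite /= mem_cat negb_or yP yU.
have [b' [b'UP E]] := IH (y :: P) b3 uniq_yPU b3P b3U.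
exists b'; split; first by rewrite cat_rcons.
have PUy : y \notin P ++ U by rewrite mem_cat negb_or yP yU.
rewrite triples_rcons -catA !mtf2_cost_cons !flip_bit_self by0 /=.
rewrite index_rcons_new // mtf_rcons_new //= eqxx -cat_cons E.
rewrite cat_rcons !size_cat !size_rcons size_cat /=; lia.
Qed.

(* MTF2 on in-order requests to R from rev Q ++ R, bits 0 on Q and 1 on R:
   each item pays its position |Q|+1, |Q|+2, ... and moves to the front. *)
Lemma mtf2_in_order (R Q : seq nat) (b : nat -> bool) (s : seq nat) :
  uniq (Q ++ R) -> {in Q, forall z, b z = false} -> {in R, forall z, b z = true} ->
  exists b' : nat -> bool, {in Q ++ R, forall z, b' z = false} /\
    mtf2_cost b (rev Q ++ R) (R ++ s) =
    sum_from (size Q) (size R) + mtf2_cost b' (rev (Q ++ R)) s.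
Proof.
elim: R Q b => [|y R IH] Q b uniq_QR bQ bR; first by exists b; rewrite !cats0.
have uniq_QyR : uniq (rcons Q y ++ R) by rewrite cat_rcons.
move: (uniq_QyR); rewrite cat_uniq rcons_uniq => /and3P[/andP[yQ _] _ _].
have yR : y \notin R by move: uniq_QR; rewrite cat_uniq /= => /and4P[_ _ + _].
have by1 : b y = true by apply: bR; rewrite mem_head.
have b1Q : {in rcons Q y, forall z, flip_bit b y z = false}.
  move=> z; rewrite mem_rcons; apply: flip_bit_cons => //; by rewrite by1.
have b1R : {in R, forall z, flip_bit b y z = true}.
  by apply: flip_bit_notin => // z zR; apply: bR; rewrite in_cons zR orbT.
have [b' [b'QR E]] := IH (rcons Q y) (flip_bit b y) uniq_QyR b1Q b1R.
exists b'; split; first by rewrite -cat_rcons.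
rewrite cat_cons mtf2_cost_cons by1 index_cat_cons ?mem_rev // mtf_cat_cons ?mem_rev //.
by rewrite -cat_cons -rev_rcons E cat_rcons size_rev size_rcons addnA.
Qed.

Definition mtf2_phase_cost (n : nat) : nat := n * (2 * n).+1 + sum_from 0 n.

Lemma mtf2_phases (m : nat) (ys : seq nat) (b : nat -> bool) :
  uniq ys -> {in ys, forall z, b z = false} ->
  mtf2_cost b ys (phases m ys) = m * mtf2_phase_cost (size ys).
Proof.
elim: m ys b => [|m IH] ys b uniq_ys bys //=.
rewrite /phase -catA.
have [b1 [b1ys E1]] := @mtf2_triples ys [::] b (ys ++ phases m (rev ys)) uniq_ys
  ltac:(by []) bys.
rewrite cats0 in b1ys E1; rewrite E1.
have [b2 [b2ys E2]] := @mtf2_in_order ys [::] b1 (phases m (rev ys)) uniq_ys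
  ltac:(by []) b1ys.
rewrite E2 IH ?rev_uniq //; last by move=> z; rewrite mem_rev; exact: b2ys.
by rewrite size_rev /mtf2_phase_cost mulSn addnA.
Qed.

Lemma offline_serve (L : seq nat) (r : nat) (s : seq nat) (j k : nat) :
  j <= index r L -> offline_cost (move_to r j L) s k ->
  offline_cost L (r :: s) ((index r L).+1 + k).
Proof. by move=> jr off; have := @off_cons L r s [::] j k jr off. Qed.

Lemma offline_static (sg L s : seq nat) (k : nat) :
  {subset sg <= L} -> offline_cost L s k ->
  exists k0, k0 <= size L * size sg /\ offline_cost L (sg ++ s) (k0 + k).
Proof.
elim: sg => [|r sg IH] sgL off; first by exists 0.
have rL : r \in L by apply: sgL; rewrite mem_head.
have sgL' : {subset sg <= L} by move=> x xsg; apply: sgL; rewrite in_cons xsg orbT.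
have [k0 [k0_le off0]] := IH sgL' off.
exists ((index r L).+1 + k0); split.
  by rewrite mulnS leq_add // index_mem.
rewrite -addnA; apply: (offline_serve (j := index r L)) => //.
by rewrite move_to_index.
Qed.

Lemma offline_in_order (R A s : seq nat) (k : nat) :
  uniq (A ++ R) -> offline_cost (A ++ R) s k ->
  offline_cost (A ++ R) (R ++ s) (sum_from (size A) (size R) + k).
Proof.
elim: R A => [|y R IH] A uniq_AR off //.
have yA : y \notin A.
  by move: uniq_AR; rewrite -cat_rcons cat_uniq rcons_uniq => /and3P[/andP[]].
have := IH (rcons A y); rewrite !cat_rcons size_rcons => /(_ uniq_AR off) off'.
rewrite /= -addnA -{1}(index_cat_cons R yA).
apply: (offline_serve (j := index y (A ++ y :: R))) => //.
by rewrite move_to_index // mem_cat mem_head orbT.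
Qed.

(* The offline strategy on triple requests: the tripled item, at position
   |P|+1 of P ++ rev U, is moved to the front and then costs 1 twice. *)
Lemma offline_triples (U P s : seq nat) (k : nat) :
  uniq (P ++ U) -> offline_cost (U ++ P) s k ->
  offline_cost (P ++ rev U) (triples U ++ s) (sum_from (size P).+2 (size U) + k).
Proof.
elim/last_ind: U P => [|U y IH] P uniq_PU off; first by rewrite cats0.
move: uniq_PU; rewrite -rcons_cat rcons_uniq mem_cat negb_or => /andP[/andP[yP yU] uniq_PU].
have uniq_yPU : uniq ((y :: P) ++ U) by rewrite /= mem_cat negb_or yP yU.
have := IH (y :: P); rewrite cat_rcons in off => /(_ uniq_yPU off) off'.
have mtf_head (X : seq nat) : move_to y 0 (y :: X) = y :: X.
  by rewrite move_to_front /mtf /= eqxx.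
set yPU := (y :: P) ++ rev U.
have -> : sum_from (size P).+2 (size (rcons U y)) + k =
    (index y (P ++ y :: rev U)).+1 + ((index y yPU).+1 +
      ((index y yPU).+1 + (sum_from (size (y :: P)).+2 (size U) + k))).
  by rewrite index_cat_cons // /yPU /= eqxx size_rcons /=; lia.
rewrite triples_rcons rev_rcons.
apply: (offline_serve (j := 0)) => //; rewrite move_to_front mtf_cat_cons //.
apply: (offline_serve (j := 0)) => //; rewrite mtf_head.
by apply: (offline_serve (j := 0)) => //; rewrite mtf_head.
Qed.

Definition offline_phase_cost (n : nat) : nat := sum_from 2 n + sum_from 0 n.

Lemma offline_phases (m : nat) (ys : seq nat) :
  uniq ys -> offline_cost (rev ys) (phases m ys) (m * offline_phase_cost (size ys)).
Proof.
elim: m ys => [|m IH] ys uniq_ys; first exact: off_nil.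
have := IH (rev ys); rewrite rev_uniq revK size_rev => /(_ uniq_ys) off.
have := @offline_in_order ys [::] _ _ uniq_ys off => /= off_ys.
have := @offline_triples ys [::] _ _ uniq_ys; rewrite cats0 => /(_ _ _ off_ys) /=.
by rewrite /phase -catA mulSn /offline_phase_cost -addnA.
Qed.

Lemma offline_cost_has_min (L s : seq nat) (k : nat) :
  offline_cost L s k -> exists opt, is_OPT L s opt /\ opt <= k.
Proof.
elim: k {-2}k (leqnn k) => [|K IH] k k_le off.
  by exists k; split=> //; split=> // k' _; move: k_le; rewrite leqn0 => /eqP ->.
have [[k' [k'_lt off']] | no_smaller] :=
  classic (exists k', k' < k /\ offline_cost L s k').
  have [opt [opt_OPT opt_le]] := IH k' (leq_trans k'_lt k_le) off'.
  by exists opt; split=> //; apply: leq_trans opt_le (ltnW k'_lt).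
exists k; split=> //; split=> // k' off'.
by rewrite leqNgt; apply/negP => k'_lt; apply: no_smaller; exists k'.
Qed.

Lemma opt_after_prefix (ys pre : seq nat) (m : nat) :
  uniq ys -> {subset pre <= ys} ->
  exists opt, is_OPT ys (pre ++ phases m (rev ys)) opt /\
    opt <= size ys * size pre + m * offline_phase_cost (size ys).
Proof.
move=> uniq_ys pre_ys.
have := @offline_phases m (rev ys); rewrite rev_uniq revK size_rev => /(_ uniq_ys) off.
have [k0 [k0_le off_pre]] := offline_static pre_ys off.
have [opt [opt_OPT opt_le]] := offline_cost_has_min off_pre.
by exists opt; split=> //; apply: leq_trans opt_le _; rewrite leq_add2r.
Qed.

Lemma many_with_bit (bits : nat -> bool) (v : bool) :
  (forall N, exists x, N <= x /\ bits x = v) ->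
  forall n, exists xs, uniq xs /\ size xs = n /\ {in xs, forall x, bits x = v}.
Proof.
move=> unbounded n.
suff [xs [M [uniq_xs [size_xs xs_bits]]]] : exists xs M, uniq xs /\ size xs = n /\
    {in xs, forall x, bits x = v /\ x < M}.
  by exists xs; split=> //; split=> // x /xs_bits[].
elim: n => [|n [xs [M [uniq_xs [size_xs xs_bits]]]]]; first by exists [::], 0.
have [x [Mx bx]] := unbounded M.
have x_xs : x \notin xs by apply/negP => /xs_bits[_]; rewrite ltnNge Mx.
exists (x :: xs), x.+1; split; first by rewrite /= x_xs uniq_xs.
split; first by rewrite /= size_xs.
move=> y; rewrite in_cons => /orP[/eqP -> // | /xs_bits[y_bit yM]].
by split=> //; apply: leq_trans yM _; apply: leq_trans Mx _.
Qed.

Lemma uniform_bits (bits : nat -> bool) (n : nat) :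
  exists xs v, uniq xs /\ size xs = n /\ {in xs, forall x, bits x = v}.
Proof.
have [many_false | few_false] := classic (forall N, exists x, N <= x /\ bits x = false).
  by have [xs ?] := many_with_bit many_false n; exists xs, false.
have [N no_false] := not_all_ex_not _ _ few_false.
have many_true : forall N', exists x, N' <= x /\ bits x = true.
  move=> N'; exists (maxn N N'); split; first exact: leq_maxr.
  apply/negbNE/negP => /negbTE bx; apply: no_false.
  by exists (maxn N N'); split=> //; exact: leq_maxl.
by have [xs ?] := many_with_bit many_true n; exists xs, true.
Qed.

(* With bits 1 the prefix ys resets
   the bits to 0 and reverses the list; with bits 0 the prefix is one phase. *)
Lemma mtf2_instance (bits : nat -> bool) (n m : nat) :
  exists (L sg : seq nat) (opt : nat),
    [/\ uniq L, {subset sg <= L}, is_OPT L sg opt,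
        m * mtf2_phase_cost n <= mtf2_cost bits L sg &
        opt <= 4 * n * n + m * offline_phase_cost n].
Proof.
have [ys [v [uniq_ys [size_ys ys_bits]]]] := uniform_bits bits n.
have sub_ys (pre : seq nat) :
    {subset pre <= ys} -> {subset pre ++ phases m (rev ys) <= ys}.
  by move=> pre_ys x; rewrite mem_cat => /orP[/pre_ys // | /mem_phases]; rewrite mem_rev.
case: v ys_bits => ys_bits.
- have [opt [opt_OPT opt_le]] := @opt_after_prefix ys ys m uniq_ys (fun x xys => xys).
  exists ys, (ys ++ phases m (rev ys)), opt; split=> //.
  + exact: sub_ys.
  + have [b' [b'ys ->]] := @mtf2_in_order ys [::] bits (phases m (rev ys)) uniq_ys
      ltac:(by []) ys_bits.
    rewrite mtf2_phases ?rev_uniq ?size_rev ?size_ys ?leq_addl // => x.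
    by rewrite mem_rev; exact: b'ys.
  + by move: opt_le; rewrite size_ys; lia.
- have pre_ys : {subset phase ys <= ys}.
    by move=> x; rewrite mem_cat => /orP[/mem_triples | ].
  have [opt [opt_OPT opt_le]] := opt_after_prefix m uniq_ys pre_ys.
  exists ys, (phases m.+1 ys), opt; split=> //.
  + exact: mem_phases.
  + by rewrite mtf2_phases // size_ys leq_mul2r leqnSn orbT.
  + by move: opt_le; rewrite /phase size_cat size_triples size_ys; lia.
Qed.

Lemma mtf2_phase_cost_closed (n : nat) : 2 * mtf2_phase_cost n = 5 * n * n + 3 * n.
Proof. by rewrite /mtf2_phase_cost mulnDr sum_from_closed; lia. Qed.

Lemma offline_phase_cost_closed (n : nat) : 2 * offline_phase_cost n = 2 * n * n + 6 * n.
Proof. by rewrite /offline_phase_cost mulnDr !sum_from_closed; lia. Qed.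

Lemma phase_ratio_at (c : R) (n : nat) :
  (1 <= INR n)%R -> (6 * c < (5 - 2 * c) * INR n)%R ->
  (c * INR (offline_phase_cost n) < INR (mtf2_phase_cost n))%R.
Proof.
move: (mtf2_phase_cost_closed n) (offline_phase_cost_closed n).
move: (mtf2_phase_cost n) (offline_phase_cost n) => C D /(f_equal INR) eC /(f_equal INR) eD.
move: eC eD; rewrite !mult_INR !plus_INR !mult_INR !S_INR INR_0 => eC eD n_ge1 n_big.
nra.
Qed.

Lemma phase_ratio (c : R) : (c < 5 / 2)%R ->
  exists n : nat, (c * INR (offline_phase_cost n) < INR (mtf2_phase_cost n))%R.
Proof.
move=> c_lt; have gap_pos : (0 < 5 - 2 * c)%R by lra.
have [n0 n0_big] := INR_unbounded (6 * c / (5 - 2 * c)).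
exists n0.+1; apply: phase_ratio_at; rewrite S_INR; first by have := pos_INR n0; lra.
have := Rmult_lt_compat_r _ _ _ gap_pos n0_big.
have -> : (6 * c / (5 - 2 * c) * (5 - 2 * c) = 6 * c)%R by field; lra.
nra.
Qed.

Lemma linear_gap (c b X Y Z : R) :
  (c * Z < X)%R -> exists m : nat, (c * (Y + INR m * Z) + b < INR m * X)%R.
Proof.
move=> cZ_lt; have gap_pos : (0 < X - c * Z)%R by lra.
have [m m_big] := INR_unbounded ((c * Y + b) / (X - c * Z)).
exists m; have := Rmult_lt_compat_r _ _ _ gap_pos m_big.
have -> : ((c * Y + b) / (X - c * Z) * (X - c * Z) = c * Y + b)%R by field; lra.
nra.
Qed.

(* Competitive ratio at least 5/2: reduce to c >= 0, choose n so that a phase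
   has ratio above c, then m so that m phases beat the additive slack. *)
Theorem lemma11 (bits : nat -> bool) (c b : R) :
  (c < 5 / 2)%R ->
  exists (L sigma : seq nat),
    uniq L /\ all (fun x => x \in L) sigma /\
    exists opt : nat, is_OPT L sigma opt /\
      (INR (mtf2_cost bits L sigma) > c * INR opt + b)%R.
Proof.
move=> c_lt.
have [c' [c'_ge0 c_le c'_lt]] : exists c', [/\ (0 <= c')%R, (c <= c')%R & (c' < 5 / 2)%R].
  by exists (Rmax c 0); split; [exact: Rmax_r | exact: Rmax_l | apply: Rmax_lub_lt; lra].
have [n ratio] := phase_ratio c'_lt.
have [m gap] := linear_gap b (INR (4 * n * n)) ratio.
have [L [sg [opt [uniq_L sg_L opt_OPT mtf2_ge opt_le]]]] := mtf2_instance bits n m.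
exists L, sg; split=> //; split; first exact/allP.
exists opt; split=> //.
have /le_INR mtf2_ge' := leP mtf2_ge; have /le_INR opt_le' := leP opt_le.
rewrite mult_INR in mtf2_ge'; rewrite plus_INR [INR (m * _)]mult_INR in opt_le'.
have := Rmult_le_compat_l _ _ _ c'_ge0 opt_le'.
have := Rmult_le_compat_r _ _ _ (pos_INR opt) c_le.
lra.
Qed.
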